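(* Let $G$ be a finite Weetman graph, $v_0\in V(G)$, and let $C$ be a cluster of $G$ with respect to $v_0$ contained in $S^k$ with $k\ge 1$. Then there is a unique cluster $a(C)\subseteq S^{k-1}$ adjacent to $C$ in the cluster graph $\mathcal{C}(G)$, and every path in $G$ from $v_0$ to a vertex of $C$ contains a vertex of $a(C)$.
   Context: All graphs are simple and connected; $d$ is graph distance and $\mathrm{pred}_{v_0}(v)=\{u : uv\in E(G),\ d(v_0,u)=d(v_0,v)-1\}$. $G$ is Weetman if for every vertex $v_0$: (Triangle Condition) for every two adjacent vertices $v,v'$ with $d(v_0,v)=d(v_0,v')=k$, there is $u$ with $d(v_0,u)=k-1$ and $uv,uv'\in E(G)$; (Interval Condition) for every vertex $v$, the subgraph induced by $\mathrm{pred}_{v_0}(v)$ is connected. For $i\ge0$ let $S^i=\{v: d(v_0,v)=i\}$. The clusters with respect to $v_0$ are the vertex sets of the connected components of the induced subgraphs $G[S^i]$, $i\ge 0$. The cluster graph $\mathcal{C}(G)$ has the clusters as vertices, two distinct clusters $C,C'$ being adjacent iff some $v\in C$, $v'\in C'$ satisfy $vv'\in E(G)$. *)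

From mathcomp Require Import all_boot.
Set Implicit Arguments. Unset Strict Implicit. Unset Printing Implicit Defensive.

Section Graphs.
Variable T : finType.
Implicit Types (e : rel T) (x y : T).

Fixpoint ball e (n : nat) x : {set T} :=
  match n with
  | 0 => [set x]
  | n'.+1 => ball e n' x :|: [set y | [exists z in ball e n' x, e z y]]
  end.

(* graph distance: least n with y in ball n x; (= #|T| if unreachable, which
   does not happen in a connected graph since distances are < #|T|) *)
Definition dist e x y : nat := find (fun n => y \in ball e n x) (iota 0 #|T|).

Definition simple_graph e := symmetric e /\ irreflexive e.
Definition connected_graph e := forall x y, connect e x y.

Definition restr e (A : {set T}) : rel T := [rel a b | [&& e a b, a \in A & b \in A]].

Definition pred_set e v0 v : {set T} :=
  [set u | e u v & (dist e v0 u).+1 == dist e v0 v].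

Definition sphere e v0 (i : nat) : {set T} := [set v | dist e v0 v == i].

Definition triangle_condition e v0 :=
  forall v v', e v v' -> dist e v0 v = dist e v0 v' ->
    exists u, (dist e v0 u).+1 = dist e v0 v /\ e u v /\ e u v'.

Definition interval_condition e v0 :=
  forall v, forall u w, u \in pred_set e v0 v -> w \in pred_set e v0 v ->
    connect (restr e (pred_set e v0 v)) u w.

Definition weetman e :=
  forall v0, triangle_condition e v0 /\ interval_condition e v0.

Definition is_cluster e v0 (C : {set T}) :=
  exists x, C = [set y | connect (restr e (sphere e v0 (dist e v0 x))) x y].

Definition cluster_adj e (C C' : {set T}) :=
  C != C' /\ exists v v', [/\ v \in C, v' \in C' & e v v'].

End Graphs.

From mathcomp Require Import all_boot zify.
Set Implicit Arguments. Unset Strict Implicit. Unset Printing Implicit Defensive.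

(* Choose a parent in pred(w) for every vertex w <> v0.  The Triangle and
   Interval Conditions give: if w and w' lie in one cluster at level m, then
   any predecessor of w and any predecessor of w' lie in one cluster at level
   m - 1 (walk from w to w' inside the cluster: consecutive vertices share a
   predecessor, and the predecessors of a single vertex are connected).
   Iterating, the level-j ancestors of two adjacent vertices above level j lie
   in one cluster, so by induction along a path from v0 the cluster of the
   level-j ancestor of its endpoint is met when the path first reaches level
   j.  For a cluster C at level k, all predecessors of all vertices of C lie
   in the cluster a(C) of the parent of one fixed vertex of C; this yields
   both the uniqueness of a(C) and the separation property. *)

Section Distance.
Variables (T : finType) (e : rel T).

Lemma ballS x n : ball e n x \subset ball e n.+1 x.
Proof. exact: subsetUl. Qed.

Lemma ball_mono x m n : m <= n -> ball e m x \subset ball e n x.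
Proof.
elim: n => [|n IH]; first by rewrite leqn0 => /eqP ->.
rewrite leq_eqVlt => /orP[/eqP-> // | lt_mn].
exact: subset_trans (IH lt_mn) (ballS x n).
Qed.

Lemma in_ballS x n y :
  (y \in ball e n.+1 x) = (y \in ball e n x) || [exists z in ball e n x, e z y].
Proof. by rewrite /= in_setU inE. Qed.

Lemma dist_le_ball x y n : y \in ball e n x -> dist e x y <= n.
Proof.
move=> yn; rewrite /dist; case: (ltnP n #|T|) => [lt_nT | le_Tn].
  rewrite leqNgt; apply/negP => lt_n_find.
  by have := before_find 0 lt_n_find; rewrite nth_iota // add0n yn.
by apply: leq_trans (find_size _ _) _; rewrite size_iota.
Qed.

Lemma last_ball x p : path e x p -> last x p \in ball e (size p) x.
Proof.
elim/last_ind: p => [|p z IH]; first by rewrite /= set11.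
rewrite rcons_path last_rcons size_rcons in_ballS => /andP[px e_last_z].
by apply/orP; right; apply/existsP; exists (last x p); rewrite IH.
Qed.

Lemma connect_ball x y : connect e x y -> exists2 n, n < #|T| & y \in ball e n x.
Proof.
move/connectP=> [p px ->]; case: (shortenP px) => q qx uniq_q _.
exists (size q); last exact: last_ball.
by have := max_card (mem (x :: q)); rewrite (card_uniqP uniq_q).
Qed.

Lemma dist_ball x y : connect e x y -> y \in ball e (dist e x y) x.
Proof.
move=> /connect_ball [n lt_nT yn].
have has_n : has (fun m => y \in ball e m x) (iota 0 #|T|).
  by apply/hasP; exists n; rewrite ?mem_iota.
have := nth_find 0 has_n; rewrite nth_iota ?add0n //.
by move: has_n; rewrite has_find size_iota.
Qed.

Lemma mem_ball x y n : connect e x y -> (y \in ball e n x) = (dist e x y <= n).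
Proof.
move=> xy; apply/idP/idP; first exact: dist_le_ball.
by move/(ball_mono x)/subsetP; apply; apply: dist_ball.
Qed.

Lemma dist_refl x : dist e x x = 0.
Proof. by apply/eqP; rewrite -leqn0; apply: dist_le_ball; rewrite set11. Qed.

Hypothesis conn : connected_graph e.

Lemma dist_edge x u v : e u v -> dist e x v <= (dist e x u).+1.
Proof.
move=> euv; rewrite -mem_ball // in_ballS; apply/orP; right.
by apply/existsP; exists u; rewrite euv mem_ball // leqnn.
Qed.

Lemma pred_set_exists x v : 0 < dist e x v -> exists u, u \in pred_set e x v.
Proof.
move=> dv_gt0; set n := (dist e x v).-1.
have dv : dist e x v = n.+1 by rewrite prednK.
have : v \in ball e n.+1 x by rewrite mem_ball // dv.
rewrite in_ballS mem_ball // dv ltnn /= => /existsP[u /andP[un euv]].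
exists u; rewrite inE euv dv eqSS /=; move: un; rewrite mem_ball //.
by have := dist_edge x euv; rewrite dv; lia.
Qed.

End Distance.

Section Restriction.
Variables (T : finType) (e : rel T).

Lemma restr_sym (S : {set T}) : symmetric e -> symmetric (restr e S).
Proof. by move=> e_sym a b; rewrite /restr /= e_sym andbA [(b \in S) && _]andbC -andbA. Qed.

Lemma connect_restr_sym (S : {set T}) : symmetric e -> connect_sym (restr e S).
Proof. by move/restr_sym/sym_connect_sym. Qed.

Lemma connect_restr_mem (S : {set T}) x y : connect (restr e S) x y -> x = y \/ y \in S.
Proof.
move/connectP=> [p px ->]; case/lastP: p px => [|p z]; first by left.
by rewrite rcons_path last_rcons => /andP[_ /and3P[_ _ zS]]; right.
Qed.

Lemma connect_restrS (S S' : {set T}) x y :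
  S \subset S' -> connect (restr e S) x y -> connect (restr e S') x y.
Proof.
move=> sSS'; apply: connect_sub => a b /and3P[eab aS bS]; apply: connect1.
by rewrite /restr /= eab !(subsetP sSS').
Qed.

End Restriction.

Section Weetman.
Variables (T : finType) (e : rel T) (v0 : T).
Hypotheses (conn : connected_graph e) (weet : weetman e).

Lemma pred_set_sub w : pred_set e v0 w \subset sphere e v0 (dist e v0 w).-1.
Proof. by apply/subsetP=> u; rewrite !inE => /andP[_ /eqP <-]. Qed.

Lemma pred_set_connect w u u' :
  u \in pred_set e v0 w -> u' \in pred_set e v0 w ->
  connect (restr e (sphere e v0 (dist e v0 w).-1)) u u'.
Proof. by move=> uw u'w; apply: connect_restrS (pred_set_sub w) ((weet v0).2 w u u' uw u'w). Qed.

Lemma connect_preds m w w' u u' :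
  dist e v0 w = m -> connect (restr e (sphere e v0 m)) w w' ->
  u \in pred_set e v0 w -> u' \in pred_set e v0 w' ->
  connect (restr e (sphere e v0 m.-1)) u u'.
Proof.
move=> dw /connectP[p pw ->].
elim: p w u dw pw => [|z p IH] w u dw /=; first by move=> _; rewrite -dw; apply: pred_set_connect.
move=> /andP[/and3P[ewz _ zS] pz] uw u'p.
have dz : dist e v0 z = m by move: zS; rewrite inE => /eqP.
have [t [dt [etw etz]]] := (weet v0).1 w z ewz (etrans dw (esym dz)).
have tw : t \in pred_set e v0 w by rewrite inE etw dt eqxx.
have tz : t \in pred_set e v0 z by rewrite inE etz dt dw dz eqxx.
apply: connect_trans (IH z t dz pz tz u'p).
by rewrite -dw; apply: pred_set_connect.
Qed.

Definition parent w := odflt w [pick u in pred_set e v0 w].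

Lemma parent_pred w : 0 < dist e v0 w -> parent w \in pred_set e v0 w.
Proof.
move=> dw_gt0; rewrite /parent; case: pickP => [u // | none].
by have [u] := pred_set_exists conn dw_gt0; rewrite none.
Qed.

Lemma dist_parent w : 0 < dist e v0 w -> (dist e v0 (parent w)).+1 = dist e v0 w.
Proof. by move/parent_pred; rewrite inE => /andP[_ /eqP]. Qed.

Lemma connect_iter_parent j n w w' :
  dist e v0 w = j + n -> connect (restr e (sphere e v0 (j + n))) w w' ->
  connect (restr e (sphere e v0 j)) (iter n parent w) (iter n parent w').
Proof.
elim: n w w' => [|n IH] w w' dw ww'; first by rewrite addn0 in ww'.
have dw' : dist e v0 w' = j + n.+1.
  by case: (connect_restr_mem ww') => [<- // | ]; rewrite inE => /eqP.
rewrite !iterSr; apply: IH.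
  by apply/eqP; rewrite -eqSS dist_parent ?dw ?addnS.
have := connect_preds dw ww' (parent_pred _) (parent_pred _).
by rewrite addnS succnK; apply; rewrite ?dw ?dw' addnS.
Qed.

Definition ancestor j w := iter (dist e v0 w - j) parent w.

Lemma ancestor_parent w : 0 < dist e v0 w -> ancestor (dist e v0 w).-1 w = parent w.
Proof. by move=> dw_gt0; rewrite /ancestor -subn1 subKn. Qed.

Lemma connect_ancestor_up j w w' :
  e w w' -> dist e v0 w' = (dist e v0 w).+1 -> j < dist e v0 w ->
  connect (restr e (sphere e v0 j)) (ancestor j w) (ancestor j w').
Proof.
move=> ew dw' lt_jw; rewrite /ancestor dw' subSn ?(ltnW lt_jw) // iterSr.
have dw : dist e v0 w = j + (dist e v0 w - j) by rewrite subnKC // ltnW.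
apply: (connect_iter_parent dw); rewrite -dw.
have w_pred : w \in pred_set e v0 w' by rewrite inE ew dw' eqxx.
by have := pred_set_connect w_pred (parent_pred (_ : 0 < _)); rewrite dw'; apply.
Qed.

Hypothesis e_sym : symmetric e.

Lemma connect_ancestor_edge j w w' :
  e w w' -> j < dist e v0 w -> j < dist e v0 w' ->
  connect (restr e (sphere e v0 j)) (ancestor j w) (ancestor j w').
Proof.
move=> ew lt_jw lt_jw'.
have := dist_edge conn v0 ew; have := dist_edge conn v0 (_ : e w' w).
rewrite e_sym => /(_ ew) le_ww' le_w'w.
have [eq_d | [up | down]] : dist e v0 w = dist e v0 w' \/
    dist e v0 w' = (dist e v0 w).+1 \/ dist e v0 w = (dist e v0 w').+1 by lia.
- have dw : dist e v0 w = j + (dist e v0 w - j) by rewrite subnKC // ltnW.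
  rewrite /ancestor -eq_d; apply: (connect_iter_parent dw); rewrite -dw.
  by apply: connect1; rewrite /restr /= ew !inE eq_d eqxx.
- exact: connect_ancestor_up.
- rewrite connect_restr_sym //.
  by apply: connect_ancestor_up; rewrite // e_sym.
Qed.

Lemma path_meets_ancestor j x p :
  path e x p -> dist e v0 x <= j -> j < dist e v0 (last x p) ->
  exists2 y, y \in x :: p & connect (restr e (sphere e v0 j)) y (ancestor j (last x p)).
Proof.
elim/last_ind: p => [|p z IH] /=; first by lia.
rewrite rcons_path last_rcons => /andP[px e_last_z] dx dz.
have sub_p : {subset x :: p <= x :: rcons p z}.
  by move=> y; rewrite !inE mem_rcons inE => /orP[-> | ->]; rewrite ?orbT.
case: (leqP (dist e v0 (last x p)) j) => [le_last | lt_last].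
  have dl : dist e v0 (last x p) = j by have := dist_edge conn v0 e_last_z; lia.
  exists (last x p); first by apply: sub_p; apply: mem_last.
  have dz' : dist e v0 z = j.+1 by have := dist_edge conn v0 e_last_z; lia.
  have z_gt0 : 0 < dist e v0 z by rewrite dz'.
  have -> : ancestor j z = parent z by rewrite -[j]/(j.+1.-1) -dz' ancestor_parent.
  have last_pred : last x p \in pred_set e v0 z by rewrite inE e_last_z dl dz' eqxx.
  by have := pred_set_connect last_pred (parent_pred z_gt0); rewrite dz'.
have [y yp y_anc] := IH px dx lt_last.
exists y; first exact: sub_p.
by apply: connect_trans y_anc _; apply: connect_ancestor_edge.
Qed.

End Weetman.

Section Clusters.
Variables (T : finType) (e : rel T) (v0 : T).
Hypotheses (simple : simple_graph e) (conn : connected_graph e) (weet : weetman e).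

Definition cluster_of x : {set T} :=
  [set y | connect (restr e (sphere e v0 (dist e v0 x))) x y].

Let e_sym : symmetric e := simple.1.

Lemma cluster_of_refl x : x \in cluster_of x.
Proof. by rewrite inE connect0. Qed.

Lemma cluster_of_sub x : cluster_of x \subset sphere e v0 (dist e v0 x).
Proof.
by apply/subsetP=> y; rewrite inE => /connect_restr_mem[<- | //]; rewrite inE.
Qed.

Lemma dist_cluster_of x y : y \in cluster_of x -> dist e v0 y = dist e v0 x.
Proof. by move/(subsetP (cluster_of_sub x)); rewrite inE => /eqP. Qed.

Lemma cluster_of_eq x y : y \in cluster_of x -> cluster_of y = cluster_of x.
Proof.
move=> yx; rewrite /cluster_of (dist_cluster_of yx); move: yx; rewrite inE => xy.
apply/setP=> z; rewrite !inE.
by apply/idP/idP; apply: connect_trans; rewrite // connect_restr_sym.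
Qed.

Lemma is_clusterE B y : is_cluster e v0 B -> y \in B -> B = cluster_of y.
Proof. by move=> [x ->] yB; rewrite (cluster_of_eq yB). Qed.

Lemma cluster_of_parentE w : 0 < dist e v0 w ->
  cluster_of (parent e v0 w) =
  [set y | connect (restr e (sphere e v0 (dist e v0 w).-1)) (parent e v0 w) y].
Proof. by move=> dw_gt0; rewrite /cluster_of -(dist_parent conn dw_gt0). Qed.

Lemma pred_set_sub_cluster_parent x y :
  0 < dist e v0 x -> y \in cluster_of x -> pred_set e v0 y \subset cluster_of (parent e v0 x).
Proof.
move=> dx_gt0; rewrite inE => xy; apply/subsetP=> u uy.
rewrite (cluster_of_parentE dx_gt0) inE.
exact (connect_preds weet (erefl _) xy (parent_pred conn dx_gt0) uy).
Qed.

Lemma cluster_adj_parent x :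
  0 < dist e v0 x -> cluster_adj e (cluster_of x) (cluster_of (parent e v0 x)).
Proof.
move=> dx_gt0; have px := parent_pred conn dx_gt0.
split; last first.
  exists x, (parent e v0 x); split; rewrite ?cluster_of_refl //.
  by move: px; rewrite inE e_sym => /andP[].
apply/negP => /eqP same; have := cluster_of_refl x; rewrite same.
move/(subsetP (cluster_of_sub _)); rewrite inE -{1}(dist_parent conn dx_gt0).
by rewrite eqn_leq ltnn.
Qed.

Lemma cluster_adj_below_eq x B :
  0 < dist e v0 x -> is_cluster e v0 B -> B \subset sphere e v0 (dist e v0 x).-1 ->
  cluster_adj e (cluster_of x) B -> B = cluster_of (parent e v0 x).
Proof.
move=> dx_gt0 clB sub_B [_ [v [v' [vx v'B evv']]]].
have dv' : dist e v0 v' = (dist e v0 x).-1 by move: (subsetP sub_B v' v'B); rewrite inE => /eqP.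
have v'v : v' \in pred_set e v0 v.
  by rewrite inE (e_sym v' v) evv' dv' (dist_cluster_of vx) (prednK dx_gt0) eqxx.
have := subsetP (pred_set_sub_cluster_parent dx_gt0 vx) v' v'v.
by move/cluster_of_eq <-; apply: is_clusterE.
Qed.

Lemma path_meets_cluster_parent x p :
  0 < dist e v0 x -> path e v0 p -> last v0 p \in cluster_of x ->
  exists2 y, y \in v0 :: p & y \in cluster_of (parent e v0 x).
Proof.
move=> dx_gt0 p_path last_x.
have dl_gt0 : 0 < dist e v0 (last v0 p) by rewrite (dist_cluster_of last_x).
have v0_below : dist e v0 v0 <= (dist e v0 (last v0 p)).-1 by rewrite dist_refl.
have last_above : (dist e v0 (last v0 p)).-1 < dist e v0 (last v0 p) by rewrite prednK.
have [y yp] := path_meets_ancestor conn weet e_sym p_path v0_below last_above.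
rewrite (ancestor_parent dl_gt0) => y_par; exists y => //.
have par_x := subsetP (pred_set_sub_cluster_parent dx_gt0 last_x) _ (parent_pred conn dl_gt0).
by rewrite -(cluster_of_eq par_x) (cluster_of_parentE dl_gt0) inE connect_restr_sym.
Qed.

End Clusters.

Theorem mainTheorem5 (T : finType) (e : rel T)
  (Hsimple : simple_graph e) (Hconn : connected_graph e) (HW : weetman e)
  (v0 : T) (C : {set T}) (k : nat)
  (HC : is_cluster e v0 C) (HCk : C \subset sphere e v0 k) (Hk : 1 <= k) :
  exists A : {set T},
    [/\ is_cluster e v0 A, A \subset sphere e v0 k.-1 & cluster_adj e C A] /\
    (forall B : {set T},
        [/\ is_cluster e v0 B, B \subset sphere e v0 k.-1 & cluster_adj e C B] ->
        B = A) /\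
    (forall p : seq T, path e v0 p -> last v0 p \in C ->
        exists2 x, x \in v0 :: p & x \in A).
Proof.
have [x C_x] := HC; rewrite -/(cluster_of e v0 x) in C_x; subst C.
have := subsetP HCk x (cluster_of_refl e v0 x); rewrite inE => /eqP dx.
have dx_gt0 : 0 < dist e v0 x by rewrite dx.
exists (cluster_of e v0 (parent e v0 x)); split; [split | split].
- by exists (parent e v0 x).
- by rewrite -dx -(dist_parent Hconn dx_gt0); apply: cluster_of_sub.
- exact: cluster_adj_parent.
- move=> B [clB sub_B adjB]; apply: (cluster_adj_below_eq Hsimple Hconn HW dx_gt0 clB _ adjB).
  by rewrite dx.
- by move=> p; apply: path_meets_cluster_parent.
Qed.
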